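(* Let $\mu$ be a probability measure on $\mathbb{R}^n$ that is $\alpha$-regular for some $\alpha\geq 1$. Then for every $t\geq 2$, $$B_t(\mu)\subseteq 4e\alpha\, Z_t(\mu).$$
   Context: $\mu$ is $\alpha$-regular if for all $s\geq t\geq 2$ and all $v\in\mathbb{R}^n$, $\left(\int|\langle v,x\rangle|^s d\mu(x)\right)^{1/s}\leq \alpha\frac{s}{t}\left(\int|\langle v,x\rangle|^t d\mu(x)\right)^{1/t}$. $\Lambda_\mu(v)=\ln\int e^{\langle v,x\rangle}d\mu(x)$ and the Cramér transform is $\Lambda_\mu^*(v)=\sup_{u\in\mathbb{R}^n}\{\langle v,u\rangle-\Lambda_\mu(u)\}$; $B_t(\mu)=\{v:\Lambda^*_\mu(v)\leq t\}$. $Z_t(\mu)$ is the convex body with support function $h_{Z_t(\mu)}(y)=\left(\int|\langle x,y\rangle|^t d\mu(x)\right)^{1/t}$; equivalently $Z_t(\mu)=\{x: |\langle v,x\rangle|^t\leq \int|\langle v,y\rangle|^t d\mu(y)\ \forall v\}$. *)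

From HB Require Import structures.
From mathcomp Require Import all_boot all_order all_algebra.
From mathcomp Require Import all_classical all_reals all_analysis.
Set Implicit Arguments. Unset Strict Implicit. Unset Printing Implicit Defensive.
Import Order.TTheory GRing.Theory Num.Theory.
Import numFieldNormedType.Exports.
Local Open Scope classical_set_scope.
Local Open Scope ring_scope.

(* R^n as row vectors 'rV[R]_n, equipped with its Borel sigma-algebra
   (generated by the open sets of the product/matrix topology). *)
Definition Rn (R : realType) (n : nat) :=
  g_sigma_algebraType [set A : set 'rV[R]_n | open A].

Definition dotp (R : realType) (n : nat) (u v : 'rV[R]_n) : R :=
  \sum_(i < n) u ord0 i * v ord0 i.

Section Defs.
Variables (R : realType) (n : nat) (mu : probability (Rn R n) R).
Local Open Scope ereal_scope.

(* Lambda_mu(u) = ln \int e^{<u,x>} dmu(x)  (= +oo if the integral is infinite) *)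
Definition logLaplace (u : 'rV[R]_n) : \bar R :=
  match \int[mu]_x (expR (dotp u x))%:E with
  | r%:E => (ln r)%:E
  | _ => +oo
  end.

Definition cramer (v : 'rV[R]_n) : \bar R :=
  ereal_sup [set (dotp v u)%:E - logLaplace u | u in [set: 'rV[R]_n]].

Definition Bt (t : R) : set 'rV[R]_n := [set v | cramer v <= t%:E].

Definition moment (t : R) (v : 'rV[R]_n) : \bar R :=
  \int[mu]_x (`|dotp v x| `^ t)%:E.

Definition Zt (t : R) : set 'rV[R]_n :=
  [set x | forall v : 'rV[R]_n, (`|dotp v x| `^ t)%:E <= moment t v].

Definition regular (alpha : R) : Prop :=
  forall (s t : R), (2 <= t)%R -> (t <= s)%R -> forall v : 'rV[R]_n,
    moment s v `^ (s^-1)%R <= (alpha * s / t)%:E * moment t v `^ (t^-1)%R.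

End Defs.

(* Fix v in B_t(mu) and a direction w, normalised so that the t-th moment of
   <w, .> is at most radius^t with radius = 3t/(5e alpha).  Regularity bounds the
   moment of order k >= t by (alpha k/t radius)^k = (3k/(5e))^k <= k! (3/5)^k,
   and the moments of order k < t are controlled by the t-th one, so summing the
   exponential series gives  int e^|<w,x>| dmu <= 2 e^radius + 5/2 <= e^(7t/5),
   i.e. Lambda_mu(+-w) <= 7t/5.  As Lambda^*_mu(v) <= t, the duality
   <v,u> <= Lambda^*_mu(v) + Lambda_mu(u) yields |<w,v>| <= 12t/5 = 4e alpha radius,
   which after undoing the normalisation is the inequality defining
   v/(4e alpha) in Z_t(mu). *)

From HB Require Import structures.
From mathcomp Require Import all_boot all_order all_algebra.
From mathcomp Require Import all_classical all_reals all_analysis.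
From mathcomp Require Import measurable_realfun.
From mathcomp Require Import ring lra.
Set Implicit Arguments. Unset Strict Implicit. Unset Printing Implicit Defensive.
Import Order.TTheory GRing.Theory Num.Theory.
Import numFieldNormedType.Exports.
Local Open Scope classical_set_scope.
Local Open Scope ring_scope.

Section real_inequalities.
Variable R : realType.

Lemma exprn_le_powR (A y t : R) (k : nat) : 0 < A -> 0 <= y -> k%:R <= t ->
  y ^+ k <= A ^+ k * (1 + (y / A) `^ t).
Proof.
move=> A_gt0 y_ge0 kt; set z := y / A.
have z_ge0 : 0 <= z by rewrite /z divr_ge0 // ltW.
have -> : y = A * z by rewrite /z mulrC divfK ?gt_eqF.
rewrite exprMn ler_pM2l ?exprn_gt0 //.
have [z_le1|z_gt1] := leP z 1.
  by rewrite (le_trans (exprn_ile1 _ z_ge0 z_le1)) // lerDl powR_ge0.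
rewrite -powR_mulrn // (@le_trans _ _ (z `^ t)) ?lerDr //.
by rewrite ler_powR // ltW.
Qed.

Lemma natrX_div_fact_le_expR (k : nat) : k%:R ^+ k / k`!%:R <= expR 1 ^+ k :> R.
Proof.
rewrite -expRM_natl mulr1.
case: k => [|k]; first by rewrite expr0 fact0 divr1 expR0.
by rewrite (le_trans _ (expR_ge1Dxn k (ler0n _ _))) // lerDr.
Qed.

Lemma expR1_ge2 : 2 <= expR 1 :> R.
Proof. by have := expR_ge1Dx (1 : R); lra. Qed.

Lemma affine_expR_le_expR (A t : R) : 2 <= t -> 0 <= A <= 3 * t / 10 ->
  2 * expR A + 5 / 2 <= expR (7 / 5 * t).
Proof.
move=> t_ge2 /andP[A_ge0 A_le].
have eA_ge1 : 1 <= expR A by have := expR_ge1Dx A; lra.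
have e15 : 6 / 5 <= expR (1 / 5) :> R by have := expR_ge1Dx (1 / 5 : R); lra.
have e115 : 24 / 5 <= expR (11 / 5) :> R.
  rewrite (_ : 11 / 5 = 1 + 1 + 1 / 5) ?expRD; last by field.
  have := expR1_ge2; nra.
have eAt : expR A <= expR (3 * t / 10) by rewrite ler_expR.
have : 24 / 5 * expR A <= expR (7 / 5 * t).
  rewrite (_ : 7 / 5 * t = 3 * t / 10 + 11 / 5 + (11 / 10 * t - 11 / 5)); last by field.
  set d := 11 / 10 * t - 11 / 5.
  have ed : 1 <= expR d by have := expR_ge1Dx d; rewrite /d; lra.
  rewrite 2!expRD.
  have h : 24 / 5 * expR A <= expR (3 * t / 10) * expR (11 / 5).
    by have := expR_gt0 A; nra.
  by rewrite (le_trans h) // ler_peMr // mulr_ge0 ?expR_ge0.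
lra.
Qed.

Lemma powRVK (x s : R) : s != 0 -> 0 <= x -> (x `^ s^-1) `^ s = x.
Proof. by move=> s_neq0 x_ge0; rewrite -powRrM mulVf // powRr1. Qed.

Lemma powRKV (x s : R) : s != 0 -> 0 <= x -> (x `^ s) `^ s^-1 = x.
Proof. by move=> s_neq0 x_ge0; rewrite -powRrM mulfV // powRr1. Qed.

Lemma powRV_le (x y s : R) : 0 < s -> 0 <= x -> 0 <= y ->
  (x `^ s^-1 <= y) = (x <= y `^ s).
Proof.
move=> s_gt0 x_ge0 y_ge0; have s_neq0 : s != 0 by rewrite gt_eqF.
apply/idP/idP => le_xy.
  by rewrite -(powRVK s_neq0 x_ge0) ge0_ler_powR ?nnegrE ?powR_ge0 // ltW.
by rewrite -(powRKV s_neq0 y_ge0) ge0_ler_powR ?nnegrE ?invr_ge0 ?powR_ge0 // ltW.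
Qed.

Lemma le_powRV (x y s : R) : 0 < s -> 0 <= x -> 0 <= y ->
  (y <= x `^ s^-1) = (y `^ s <= x).
Proof.
move=> s_gt0 x_ge0 y_ge0; have s_neq0 : s != 0 by rewrite gt_eqF.
apply/idP/idP => le_yx.
  by rewrite -(powRVK s_neq0 x_ge0) ge0_ler_powR ?nnegrE ?powR_ge0 // ltW.
by rewrite -(powRKV s_neq0 y_ge0) ge0_ler_powR ?nnegrE ?invr_ge0 ?powR_ge0 // ltW.
Qed.

Lemma scaled_natrX_div_fact_le (c : R) (k : nat) : 0 <= c ->
  (c * k%:R / expR 1) ^+ k / k`!%:R <= c ^+ k.
Proof.
move=> c_ge0; have e_gt0 := expR_gt0 (1 : R).
rewrite -mulrA exprMn -mulrA ler_piMr ?exprn_ge0 // expr_div_n mulrAC.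
by rewrite ler_pdivrMr ?exprn_gt0 // mul1r natrX_div_fact_le_expR.
Qed.

Lemma le_of_scaled_bound (a b c A : R) : 0 < A -> 0 <= b ->
  (forall lam, 0 < lam -> lam * b <= A -> lam * a <= A * c) -> a <= c * b.
Proof.
move=> A_gt0 b_ge0 scaled; have [b_gt0|] := ltP 0 b.
  have := scaled (A / b); rewrite divr_gt0 // divfK ?gt_eqF // lexx.
  by move=> /(_ isT isT); rewrite mulrAC ler_pdivrMr // -mulrA ler_pM2l.
move=> b_le0; have b0 : b = 0 by apply/le_anti/andP.
subst b; rewrite mulr0 leNgt; apply/negP => a_gt0.
have := scaled ((`|A * c| + 1) / a); rewrite divr_gt0 // mulr0 ltW //.
rewrite divfK ?gt_eqF // => /(_ isT isT).
by have := ler_norm (A * c); lra.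
Qed.

End real_inequalities.

Section exponential_series.
Variable R : realType.

Lemma eseries_EFin (f : nat -> R) : cvgn (series f) ->
  (\sum_(k <oo) (f k)%:E)%E = (limn (series f))%:E.
Proof.
move=> cvg_f; rewrite -EFin_lim //.
suff -> : (fun N => (\sum_(0 <= k < N) (f k)%:E)%E) = EFin \o series f by [].
by apply/funext => N; rewrite /series /= sumEFin.
Qed.

Lemma expR_eseries (y : R) :
  (expR y)%:E = (\sum_(k <oo) (y ^+ k / k`!%:R)%:E)%E.
Proof. exact/esym/eseries_EFin/is_cvg_series_exp_coeff. Qed.

Lemma eseries_expR_geometric (A q : R) : 0 <= q < 1 ->
  (\sum_(k <oo) (2 * (A ^+ k / k`!%:R) + q ^+ k)%:E)%E =
  (2 * expR A + (1 - q)^-1)%:E.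
Proof.
case/andP=> q_ge0 q_lt1.
have cvg_geo : series (geometric 1 q) @ \oo --> (1 * (1 - q)^-1).
  by apply: cvg_geometric_series; rewrite ger0_norm.
have cvg_exp := is_cvg_series_exp_coeff A.
have is_cvg_geo : cvgn (series (geometric 1 q)) by apply/cvg_ex; exists (1 * (1 - q)^-1).
transitivity (\sum_(k <oo) ((2 *: exp_coeff A + geometric 1 q) k)%:E)%E.
  by apply: eq_eseriesr => k _; rewrite /= !fctE /geometric /= mul1r.
have cvg_exp2 := @is_cvg_seriesZ _ _ (2 : R) cvg_exp.
rewrite eseries_EFin; last exact: is_cvg_seriesD.
by rewrite lim_seriesD // lim_seriesZ // (cvg_lim _ cvg_geo) // mul1r.
Qed.

End exponential_series.

Section exponential_moment.
Context d (T : measurableType d) (R : realType) (P : probability T R).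
Variables (Y : T -> R) (A t : R).
Hypotheses (mY : measurable_fun setT Y) (Y_ge0 : forall x, 0 <= Y x) (A_gt0 : 0 < A).
Hypothesis integral_powR_le1 : (\int[P]_x ((Y x / A) `^ t)%:E <= 1)%E.
Local Open Scope ereal_scope.

Let measurable_exprn_div_fact (k : nat) :
  measurable_fun [set: T] (fun x => (Y x ^+ k / k`!%:R)%:E).
Proof. by apply/measurable_EFinP/measurable_funM => //; exact: measurable_funX. Qed.

Lemma integral_exprn_div_fact_le (k : nat) : (k%:R <= t)%R ->
  \int[P]_x (Y x ^+ k / k`!%:R)%:E <= (2 * (A ^+ k / k`!%:R))%:E.
Proof.
move=> kt; set c := (A ^+ k / k`!%:R)%R.
have c_ge0 : (0 <= c)%R by rewrite divr_ge0 // exprn_ge0 // ltW.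
have m_powR : measurable_fun [set: T] (fun x => ((Y x / A) `^ t)%:E).
  apply/measurable_EFinP/(measurableT_comp (measurable_powR t)).
  exact: measurable_funM.
apply: (@le_trans _ _ (\int[P]_x (c%:E * (1 + ((Y x / A) `^ t)%:E)))).
  apply: ge0_le_integral => //.
  - by move=> x _; rewrite lee_fin divr_ge0 // exprn_ge0.
  - by apply: emeasurable_funM => //; exact: emeasurable_funD.
  - move=> x _; rewrite -EFinD -EFinM lee_fin mulrAC ler_wpM2r ?invr_ge0 //.
    exact: exprn_le_powR.
rewrite ge0_integralZl_EFin //; last 2 first.
- by move=> x _; rewrite adde_ge0 ?lee_fin ?powR_ge0.
- exact: emeasurable_funD.
rewrite ge0_integralD //; last by move=> x _; rewrite lee_fin powR_ge0.
have PT : (P : measure T R) [set: T] = 1 := probability_setT P.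
rewrite integral_cst // PT mul1e.
by rewrite [(2 * c)%R]mulrC (EFinM c 2) lee_wpmul2l ?lee_fin // -[2%R]/(1 + 1)%R EFinD leeD2l.
Qed.

Lemma integral_expR_le (q : R) : (0 <= q < 1)%R ->
  (forall k : nat, (t <= k%:R)%R ->
    \int[P]_x (Y x ^+ k / k`!%:R)%:E <= (q ^+ k)%:E) ->
  \int[P]_x (expR (Y x))%:E <= (2 * expR A + (1 - q)^-1)%:E.
Proof.
move=> /[dup] q01 /andP[q_ge0 _] tail.
have term_ge0 k x : 0 <= (Y x ^+ k / k`!%:R)%:E by rewrite lee_fin divr_ge0 ?exprn_ge0.
under eq_integral do rewrite expR_eseries.
rewrite integral_nneseries // -eseries_expR_geometric //.
apply: lee_nneseries => [k _ _|k _]; first exact: integral_ge0.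
have [tk|kt] := leP t k%:R.
  by rewrite (le_trans (tail k tk)) // lee_fin lerDr mulr_ge0 // divr_ge0 ?exprn_ge0 ?ltW.
by rewrite (le_trans (integral_exprn_div_fact_le (ltW kt))) // lee_fin lerDl exprn_ge0.
Qed.

End exponential_moment.

Lemma continuous_measurable_Rn (R : realType) (n : nat) (f : 'rV[R]_n -> R) :
  continuous f -> measurable_fun [set: Rn R n] f.
Proof.
move=> cf; apply: (measurability _ (RGenOpens.measurableE R)).
move=> _ [_ [a [b ->]] <-]; apply: sub_sigma_algebra; rewrite setTI.
by move/continuousP: cf; apply; exact: interval_open.
Qed.

Section inner_product.
Variables (R : realType) (n : nat).
Implicit Types (u v : 'rV[R]_n) (k : R).

Lemma dotpC u v : dotp u v = dotp v u.
Proof. by apply: eq_bigr => i _; rewrite mulrC. Qed.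

Lemma dotpZl k u v : dotp (k *: u) v = k * dotp u v.
Proof. by rewrite /dotp mulr_sumr; apply: eq_bigr => i _; rewrite mxE mulrA. Qed.

Lemma dotpZr k u v : dotp u (k *: v) = k * dotp u v.
Proof. by rewrite dotpC dotpZl dotpC. Qed.

Lemma measurable_dotp u : measurable_fun [set: Rn R n] (dotp u).
Proof.
rewrite /dotp; apply: measurable_sum => i.
apply: measurable_funM => //.
exact: continuous_measurable_Rn (@coord_continuous R 1 n ord0 i).
Qed.

End inner_product.

Section moments.
Variables (R : realType) (n : nat) (mu : probability (Rn R n) R).
Implicit Types (s t alpha : R) (u v w : 'rV[R]_n).
Local Open Scope ereal_scope.

Lemma measurable_abs_dotp w : measurable_fun [set: Rn R n] (fun x => `|dotp w x|%R).
Proof. by apply: measurableT_comp => //; exact: measurable_dotp. Qed.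

Lemma measurable_abs_dotp_powR s w :
  measurable_fun [set: Rn R n] (fun x => (`|dotp w x| `^ s)%:E).
Proof.
apply/measurable_EFinP; exact: measurableT_comp (measurable_powR s) (measurable_abs_dotp w).
Qed.

Lemma moment_ge0 s w : 0 <= moment mu s w.
Proof. by apply: integral_ge0 => x _; rewrite lee_fin powR_ge0. Qed.

Lemma momentZ s (c : R) w : moment mu s (c *: w) = (`|c| `^ s)%:E * moment mu s w.
Proof.
rewrite /moment -ge0_integralZl_EFin ?powR_ge0 //.
- by apply: eq_integral => x _; rewrite dotpZl normrM powRM.
- exact: measurable_abs_dotp_powR.
Qed.

Lemma regular_moment_le alpha s t A w : (0 <= alpha)%R -> regular mu alpha ->
  (2 <= t <= s)%R -> (0 <= A)%R -> moment mu t w <= (A `^ t)%:E ->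
  moment mu s w <= ((alpha * s / t * A) `^ s)%:E.
Proof.
move=> alpha_ge0 reg /andP[t_ge2 ts] A_ge0 Mt_le.
have [t_gt0 s_gt0] : (0 < t)%R /\ (0 < s)%R by split; lra.
have coef_ge0 : (0 <= alpha * s / t)%R by rewrite divr_ge0 ?mulr_ge0 // ltW.
have := moment_ge0 t w; have := moment_ge0 s w.
have := reg s t t_ge2 ts w; move: Mt_le.
case: (moment mu t w) => [Mt| |] //= Mt_le.
case: (moment mu s w) => [Ms| |] //=; last first.
  by rewrite invr_eq0 gt_eqF // -EFinM leye_eq.
rewrite -EFinM !lee_fin => Ms_le Ms_ge0 Mt_ge0.
rewrite -powRV_le //; last exact: mulr_ge0.
apply: le_trans; first exact: Ms_le.
by rewrite ler_wpM2l // powRV_le // -lee_fin.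
Qed.

Lemma logLaplace_le u (B : R) : (0 <= B)%R ->
  \int[mu]_x (expR (dotp u x))%:E <= (expR B)%:E -> logLaplace mu u <= B%:E.
Proof.
move=> B_ge0; have : 0 <= \int[mu]_x (expR (dotp u x))%:E.
  by apply: integral_ge0 => x _; rewrite lee_fin expR_ge0.
rewrite /logLaplace; case: (\int[mu]_x _) => [r| |] //.
rewrite !lee_fin => r_ge0 r_le; have [r_le1|r_gt1] := leP r 1%R.
  by rewrite (le_trans (ln_le0 r_le1)).
by rewrite -[B]expRK ler_ln ?posrE ?expR_gt0 // (lt_trans ltr01).
Qed.

Lemma dotp_sub_logLaplace_le_cramer u v :
  (dotp v u)%:E - logLaplace mu u <= cramer mu v.
Proof. by apply: ereal_sup_ubound; exists u. Qed.

End moments.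

Section Bt_bound.
Variables (R : realType) (n : nat) (mu : probability (Rn R n) R) (alpha t : R).
Hypotheses (alpha_ge1 : 1 <= alpha) (reg : regular mu alpha) (t_ge2 : 2 <= t).

Let t_gt0 : 0 < t. Proof. by apply: lt_le_trans t_ge2. Qed.
Let t_ge0 : 0 <= t := ltW t_gt0.
Let alpha_gt0 : 0 < alpha. Proof. exact: lt_le_trans ltr01 alpha_ge1. Qed.

Let radius : R := 3 * t / (5 * expR 1 * alpha).

Let radius_gt0 : 0 < radius.
Proof. by rewrite divr_gt0 ?mulr_gt0 ?expR_gt0. Qed.

Let radius_ge0 : 0 <= radius := ltW radius_gt0.

Let radius_le : radius <= 3 * t / 10.
Proof.
have : 10 <= 5 * expR 1 * alpha by move: alpha_ge1 (expR1_ge2 R); nra.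
by rewrite ler_pdivrMr ?mulr_gt0 ?expR_gt0 //; move: t_gt0; nra.
Qed.

Lemma integral_expR_abs_dotp_le w : (moment mu t w <= (radius `^ t)%:E)%E ->
  (\int[mu]_x (expR `|dotp w x|)%:E <= (2 * expR radius + 5 / 2)%:E)%E.
Proof.
move=> Mw_le.
rewrite (_ : 5 / 2 = (1 - 3 / 5)^-1); last by field.
apply: (integral_expR_le (A := radius) (t := t)) => //.
- exact: measurable_abs_dotp.
- have -> : (\int[mu]_x ((`|dotp w x| / radius) `^ t)%:E = moment mu t (radius^-1 *: w))%E.
    apply: eq_integral => x _.
    by rewrite dotpZl normrM ger0_norm ?invr_ge0 // mulrC.
  rewrite momentZ ger0_norm ?invr_ge0 //.
  apply: le_trans (lee_wpmul2l _ Mw_le) _; first by rewrite lee_fin powR_ge0.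
  by rewrite -EFinM -powRM ?invr_ge0 // mulVf ?gt_eqF // powR1.
- by apply/andP; split; lra.
move=> k tk.
have Mk_le := regular_moment_le (ltW alpha_gt0) reg
  (introT andP (conj t_ge2 tk)) radius_ge0 Mw_le.
have -> : (\int[mu]_x (`|dotp w x| ^+ k / k`!%:R)%:E =
    (k`!%:R^-1)%:E * moment mu k%:R w)%E.
  rewrite /moment -ge0_integralZl_EFin ?invr_ge0 //.
  - by apply: eq_integral => x _; rewrite powR_mulrn // mulrC.
  - exact: measurable_abs_dotp_powR.
rewrite (_ : alpha * k%:R / t * radius = 3 / 5 * k%:R / expR 1) in Mk_le; last first.
  by rewrite /radius; field; rewrite ?gt_eqF ?expR_gt0.
apply: le_trans (lee_wpmul2l _ Mk_le) _; first by rewrite lee_fin invr_ge0.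
rewrite -EFinM lee_fin powR_mulrn ?mulr_ge0 ?expR_ge0 // mulrC.
by rewrite scaled_natrX_div_fact_le.
Qed.

Lemma Bt_abs_dotp_le v w : Bt mu t v -> (moment mu t w <= (radius `^ t)%:E)%E ->
  `|dotp w v| <= 12 / 5 * t.
Proof.
move=> Bv Mw_le; set a := dotp w v; set u := Num.sg a *: w.
have dotp_vu : dotp v u = `|a| by rewrite dotpZr dotpC normrEsg.
have dotp_ux x : dotp u x <= `|dotp w x|.
  rewrite dotpZl (le_trans (ler_norm _)) // normrM normr_sg ler_piMl //.
  by case: (a != 0).
have Lu : (logLaplace mu u <= (7 / 5 * t)%:E)%E.
  apply: logLaplace_le; first by rewrite mulr_ge0.
  apply: (@le_trans _ _ (\int[mu]_x (expR `|dotp w x|)%:E)%E); last first.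
    apply: le_trans (integral_expR_abs_dotp_le Mw_le) _.
    by rewrite lee_fin affine_expR_le_expR // radius_ge0 radius_le.
  apply: ge0_le_integral => //.
  - apply/measurable_EFinP; exact: measurableT_comp (measurable_dotp u).
  - apply/measurable_EFinP; exact: measurableT_comp (measurable_abs_dotp w).
  - by move=> x _; rewrite lee_fin ler_expR.
have := le_trans (dotp_sub_logLaplace_le_cramer mu u v) Bv.
rewrite dotp_vu; move: Lu; case: (logLaplace mu u) => [L| |] //= L_le.
by rewrite -EFinB !lee_fin in L_le *; lra.
Qed.

Lemma Bt_abs_dotp_le_moment v w M : Bt mu t v -> moment mu t w = M%:E ->
  `|dotp w v| <= 4 * expR 1 * alpha * M `^ t^-1.
Proof.
move=> Bv Mw; have M_ge0 : 0 <= M by rewrite -lee_fin -Mw moment_ge0.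
have t_neq0 : t != 0 by rewrite gt_eqF.
apply: (le_of_scaled_bound radius_gt0 (powR_ge0 _ _)) => lam lam_gt0 lamM_le.
have lam_ge0 := ltW lam_gt0.
have Mlam_le : (moment mu t (lam *: w) <= (radius `^ t)%:E)%E.
  rewrite momentZ Mw gtr0_norm // -EFinM lee_fin -(powRVK t_neq0 M_ge0).
  by rewrite -powRM ?powR_ge0 // ge0_ler_powR ?nnegrE // mulr_ge0 ?powR_ge0.
have -> : radius * (4 * expR 1 * alpha) = 12 / 5 * t.
  by rewrite /radius; field; rewrite ?gt_eqF ?expR_gt0.
by have := Bt_abs_dotp_le Bv Mlam_le; rewrite dotpZl normrM gtr0_norm.
Qed.

End Bt_bound.

Theorem proposition2p3 (R : realType) (n : nat) (mu : probability (Rn R n) R)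
  (alpha : R) :
  1 <= alpha -> regular mu alpha ->
  forall t : R, 2 <= t ->
    Bt mu t `<=` [set (4 * expR 1 * alpha) *: z | z in Zt mu t].
Proof.
move=> alpha_ge1 reg t t_ge2 v Bv; set c := 4 * expR 1 * alpha.
have c_gt0 : 0 < c by rewrite !mulr_gt0 ?expR_gt0 //; move: alpha_ge1; lra.
have t_gt0 : 0 < t by move: t_ge2; lra.
exists (c^-1 *: v); last by rewrite scalerA mulfV ?gt_eqF // scale1r.
move=> w; have := moment_ge0 mu t w.
case Mw: (moment mu t w) => [M| |] // M_ge0; last exact: leey.
have c_inv_ge0 : 0 <= c^-1 by rewrite invr_ge0 ltW.
rewrite dotpZr normrM ger0_norm // lee_fin -le_powRV ?mulr_ge0 //.
by rewrite mulrC ler_pdivrMr // mulrC (Bt_abs_dotp_le_moment alpha_ge1 reg t_ge2 Bv Mw).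
Qed.
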